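(* Let $(E,\rho)$ be a Polish metric space and $\{P(t)\}_{t\geq 0}$ a Markov semigroup of stochastic kernels on $E$. Let $V:E\to[0,\infty)$ be continuous and assume: (a) $\{P(t)\}$ has a unique invariant probability measure $\mu_*$, and there are $\gamma>0$ and a map $C:\{\nu\in\mathcal{M}_1(E):\int V\,d\nu<\infty\}\to[0,\infty)$ with $d_{\mathrm{FM}}(\nu P(t),\mu_* )\leq C(\nu)e^{-\gamma t}$ for all $t\geq 0$ and all such $\nu$, where $C(\delta_x)=\bar C(x):=\varkappa(V(x)+1)^{1/2}$ for some $\varkappa>0$; (b) there exist $A,B\geq 0$, $\Gamma>0$ with $P(t)V^2(x)\leq Ae^{-\Gamma t}V^2(x)+B$ for all $x\in E$, $t\geq 0$. Then for every $p\in(0,4]$: $\sup_{t\geq 0}\int_E\bar C^p\,d(\nu P(t))<\infty$ whenever $\nu\in\mathcal{M}_1(E)$ satisfies $\int_E V^2\,d\nu<\infty$; and $\int_E\bar C^p\,d\mu_*<\infty$. In particular $\int_E V^2\,d\mu_*<\infty$.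
   Context: $\mathcal{M}_1(E)$: Borel probability measures on $E$. $d_{\mathrm{FM}}(\mu,\nu)=\sup\{|\int f\,d\mu-\int f\,d\nu|: \|f\|_{\mathrm{BL}}\leq 1\}$, where $\|f\|_{\mathrm{BL}}=\max\{\|f\|_\infty,\sup_{x\neq y}|f(x)-f(y)|/\rho(x,y)\}$. $\nu P(t)(\cdot)=\int_E P(t)(x,\cdot)\,\nu(dx)$; invariance means $\mu_*P(t)=\mu_*$ for all $t$. *)

From HB Require Import structures.
From mathcomp Require Import all_boot all_order all_algebra.
From mathcomp Require Import all_classical all_reals all_analysis.
Set Implicit Arguments. Unset Strict Implicit. Unset Printing Implicit Defensive.
Import Order.TTheory GRing.Theory Num.Theory.
Local Open Scope classical_set_scope.
Local Open Scope ring_scope.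

Section metric_defs.
Context {R : realType} {T : Type}.
Variable rho : T -> T -> R.

Definition is_metric : Prop :=
  [/\ forall x y, rho x y = 0 <-> x = y,
      forall x y, rho x y = rho y x &
      forall x y z, rho x z <= rho x y + rho y z].

Definition rho_open : set (set T) :=
  [set A | forall x, A x -> exists2 e : R, 0 < e & [set y | rho x y < e] `<=` A].

Definition rho_cauchy (u : nat -> T) : Prop :=
  forall e : R, 0 < e -> exists N, forall m n, (N <= m)%N -> (N <= n)%N ->
    rho (u m) (u n) < e.

Definition rho_cvg (u : nat -> T) (l : T) : Prop :=
  forall e : R, 0 < e -> exists N, forall n, (N <= n)%N -> rho (u n) l < e.

Definition rho_complete : Prop :=
  forall u, rho_cauchy u -> exists l, rho_cvg u l.

Definition rho_separable : Prop :=
  exists D : set T, countable D /\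
    forall x (e : R), 0 < e -> exists2 y, D y & rho x y < e.

Definition rho_continuous (V : T -> R) : Prop :=
  forall x (e : R), 0 < e -> exists2 d : R, 0 < d &
    forall y, rho x y < d -> `|V x - V y| < e.

Definition BL1 : set (T -> R) :=
  [set f | (forall x, `|f x| <= 1) /\
           (forall x y, x <> y -> `|f x - f y| <= rho x y)].
End metric_defs.

Definition polish_borel {d} {R : realType} (T : measurableType d)
    (rho : T -> T -> R) : Prop :=
  [/\ is_metric rho, rho_complete rho, rho_separable rho &
      (@measurable d T) = <<s rho_open rho >>].

Section kact.
Local Open Scope ereal_scope.
Context d (T : measurableType d) (R : realType).
Variables (nu : {measure set T -> \bar R}) (k : R.-ker T ~> T).

Definition kact (A : set T) : \bar R := \int[nu]_x k x A.

Let kact0 : kact set0 = 0.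
Proof.
by rewrite /kact (eq_integral (cst 0)) ?integral0// => y _; rewrite measure0.
Qed.

Let kact_ge0 U : 0 <= kact U. Proof. exact: integral_ge0. Qed.

Let kact_sigma_additive : semi_sigma_additive kact.
Proof.
move=> U mU tU mUU; rewrite [X in _ --> X](_ : _ =
  \int[nu]_y (\sum_(n <oo) k y (U n))); last first.
  apply: eq_integral => V _.
  by apply/esym/cvg_lim => //; exact/measure_semi_sigma_additive.
apply/cvg_closeP; split.
  by apply: is_cvg_nneseries => n _ _; exact: integral_ge0.
rewrite closeE// integral_nneseries// => n.
exact: measurable_kernel k _ (mU n).
Qed.

HB.instance Definition _ := isMeasure.Build _ _ R
  kact kact0 kact_ge0 kact_sigma_additive.

Definition mkact : {measure set T -> \bar R} := kact.
End kact.

Section semigroup.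
Local Open Scope ereal_scope.
Context d (T : measurableType d) (R : realType).

Definition markov_semigroup (P : R -> R.-pker T ~> T) : Prop :=
  (forall x A, measurable A -> P 0%R x A = \d_x A) /\
  (forall s t : R, (0 <= s)%R -> (0 <= t)%R -> forall x A, measurable A ->
     P (s + t)%R x A = \int[P s x]_y P t y A).

Definition invariant_measure (P : R -> R.-pker T ~> T)
    (mu : {measure set T -> \bar R}) : Prop :=
  forall t : R, (0 <= t)%R -> forall A, measurable A -> mkact mu (P t) A = mu A.

Definition dFM (rho : T -> T -> R) (mu nu : {measure set T -> \bar R}) : \bar R :=
  ereal_sup [set `| \int[mu]_x (f x)%:E - \int[nu]_x (f x)%:E |
            | f in BL1 rho].
End semigroup.
Arguments markov_semigroup {d T R} P.
Arguments invariant_measure {d T R} P mu.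
Arguments dFM {d T R} rho mu nu.
Arguments mkact {d T R} nu k.
Arguments polish_borel {d R T} rho.

From HB Require Import structures.
From mathcomp Require Import all_boot all_order all_algebra.
From mathcomp Require Import all_classical all_reals all_analysis.
From mathcomp Require Import measurable_realfun giry ring lra.
Set Implicit Arguments. Unset Strict Implicit. Unset Printing Implicit Defensive.
Import Order.TTheory GRing.Theory Num.Theory.
Local Open Scope classical_set_scope.
Local Open Scope ring_scope.

(* Write W := V^2.  By invariance,
   \int min(W, N) dmustar = \int P(t) min(W, N) dmustar, and P(t) min(W, N) is
   at most B + A e^(-Gamma t) K on {W <= K} and at most N on {W > K}.
   Choosing K with N mustar{W > K} small and then t large gives
   \int min(W, N) dmustar <= B, hence \int W dmustar <= B by monotone
   convergence.  For 0 < p <= 4,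
   Cbar^p <= 1 + Cbar^4 <= (1 + 2 kappa^4) + 2 kappa^4 W, so by (b) the
   integral of Cbar^p against nu P(t) is bounded by a constant plus a multiple
   of \int W dnu, uniformly in t; mustar = mustar P(0) is a special case. *)

Lemma powR_le1Dexpr (R : realType) (b p : R) (n : nat) :
  0 <= b -> 0 < p <= n%:R -> b `^ p <= 1 + b ^+ n.
Proof.
move=> b0 /andP[p0 pn]; have [b1|b1] := leP b 1.
  apply: (@le_trans _ _ 1); last by rewrite lerDl exprn_ge0.
  have [->|bn0] := eqVneq b 0; first by rewrite powR0 ?gt_eqF.
  by rewrite -(powRr0 b); apply: ger_powR; rewrite ?lt0r ?bn0 ?b0 ?b1 ?(ltW p0).
apply: (@le_trans _ _ (b ^+ n)); last by rewrite lerDr.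
by rewrite -powR_mulrn// ler_powR// (ltW b1).
Qed.

Lemma powR_mul_sqrtD1_le (R : realType) (c v p : R) :
  0 <= c -> 0 <= v -> 0 < p <= 4 ->
  (c * Num.sqrt (v + 1)) `^ p <= (1 + 2 * c ^+ 4) + 2 * c ^+ 4 * v ^+ 2.
Proof.
move=> c0 v0 p04.
have v10 : 0 <= v + 1 by rewrite addr_ge0.
have b0 : 0 <= c * Num.sqrt (v + 1) by rewrite mulr_ge0 ?sqrtr_ge0.
apply: le_trans (@powR_le1Dexpr _ _ p 4 b0 p04) _.
have -> : (c * Num.sqrt (v + 1)) ^+ 4 = c ^+ 4 * (v + 1) ^+ 2.
  by rewrite exprMn -[4%N]/(2 * 2)%N [in X in _ * X]exprM sqr_sqrtr.
rewrite -addrA lerD2l.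
have := mulr_ge0 (exprn_ge0 4 c0) (sqr_ge0 (v - 1)).
nra.
Qed.

Lemma expR_decay_le (R : realType) (a c g e : R) :
  0 <= a -> 0 <= c -> 0 < g -> 0 < e ->
  exists2 t, 0 <= t & a * expR (- g * t) * c <= e.
Proof.
move=> a0 c0 g0 e0; exists (a * c / (g * e)).
  by rewrite divr_ge0 ?mulr_ge0 ?(ltW g0) ?(ltW e0).
rewrite mulNr expRN mulrAC ler_pdivrMr ?expR_gt0//.
apply: le_trans (ler_wpM2l (ltW e0) (expR_ge1Dx _)).
have -> : e * (1 + g * (a * c / (g * e))) = e + a * c.
  by field; rewrite !gt_eqF.
by rewrite lerDr; exact: ltW.
Qed.

Lemma rho_continuous_measurable (R : realType) d (T : measurableType d)
    (rho : T -> T -> R) (V : T -> R) :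
  polish_borel rho -> rho_continuous rho V -> measurable_fun [set: T] V.
Proof.
move=> [_ _ _ borel] V_cont.
apply: (measurability _ (RGenOInfty.measurableE R)) => _ [_ [a ->] <-].
rewrite setTI borel; apply: sub_sigma_algebra => x /=.
rewrite in_itv /= andbT => ax.
have /(_ _)[|e e0 Ve] := V_cont x (V x - a); first by rewrite subr_gt0.
exists e => // y /= /Ve Vxy; rewrite in_itv /= andbT.
have := ler_norm (V x - V y); lra.
Qed.

Lemma measurable_powR_mul_sqrtD1 (R : realType) d (T : measurableType d)
    (V : T -> R) (c p : R) :
  measurable_fun [set: T] V ->
  measurable_fun [set: T] (fun x => (c * Num.sqrt (V x + 1)) `^ p).
Proof.
move=> mV; apply: measurableT_comp (measurable_powR p) _.
apply: measurable_funM => //.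
apply: measurableT_comp (continuous_measurable_fun (@sqrt_continuous R)) _.
exact: measurable_funD.
Qed.

Section kernel_giry.
Context d d' (X : measurableType d) (Y : measurableType d') (R : realType).
Variables (k : R.-spker X ~> Y) (x : X).

Let kx : set Y -> \bar R := k x.
HB.instance Definition _ := Measure.on kx.
HB.instance Definition _ :=
  Measure_isSubProbability.Build _ _ _ kx (sprob_kernel_le1 k x).

Definition kernel_giry : giry Y R := kx.
End kernel_giry.

Lemma measurable_kernel_giry d d' (X : measurableType d)
    (Y : measurableType d') (R : realType) (k : R.-spker X ~> Y) :
  measurable_fun [set: X] (kernel_giry k).
Proof. by apply: measurable_giry_codensity => // B; exact: measurable_kernel. Qed.

Section integral_mkact.
Local Open Scope ereal_scope.
Context d (T : measurableType d) (R : realType).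
Variables (nu : subprobability T R) (k : R.-spker T ~> T).

Lemma mkact_giry_bind A : measurable A ->
  mkact nu k A = giry_bind nu (measurable_kernel_giry k) A.
Proof.
move=> mA; rewrite /giry_bind /= [RHS]giry_int_map//.
exact: measurable_giry_ev.
Qed.

Lemma integral_mkact (f : T -> \bar R) :
  (forall x, 0 <= f x) -> measurable_fun [set: T] f ->
  \int[mkact nu k]_x f x = \int[nu]_x \int[k x]_y f y.
Proof.
move=> f0 mf.
rewrite (eq_measure_integral (giry_bind nu (measurable_kernel_giry k))).
  exact: giry_int_bind.
by move=> A mA _; exact: mkact_giry_bind.
Qed.
End integral_mkact.

Section probability_integral.
Local Open Scope ereal_scope.
Context d (T : measurableType d) (R : realType).

Lemma integral_affine (mu : {measure set T -> \bar R}) (f : T -> R) (a b : R) :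
  mu [set: T] = 1 -> (0 <= a)%R -> (0 <= b)%R -> (forall x, 0 <= f x)%R ->
  measurable_fun [set: T] f ->
  \int[mu]_x (a + b * f x)%:E = a%:E + b%:E * \int[mu]_x (f x)%:E.
Proof.
move=> mu1 a0 b0 f0 mf.
under eq_integral do rewrite EFinD EFinM.
rewrite ge0_integralD//; last 2 first.
- by move=> x _; rewrite mule_ge0// lee_fin.
- by apply: measurable_funeM; exact/measurable_EFinP.
rewrite integral_cst// mu1 mule1 ge0_integralZl//.
- exact/measurable_EFinP.
- by move=> x _; rewrite lee_fin.
Qed.

Lemma measurable_set_gtr (f : T -> R) (c : R) :
  measurable_fun [set: T] f -> measurable [set x | c < f x]%R.
Proof.
by move=> mf; rewrite -[X in measurable X]setTI; exact: measurable_fun_ltr.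
Qed.

Lemma exists_tail_le (mu : probability T R) (f : T -> R) (e : R) :
  measurable_fun [set: T] f -> (0 < e)%R ->
  exists K : nat, mu [set x | K%:R < f x]%R <= e%:E.
Proof.
move=> mf e0; pose F (n : nat) := [set x | n%:R < f x]%R.
have mF n : measurable (F n) by exact: measurable_set_gtr.
have F0 : \bigcap_n F n = set0.
  apply/seteqP; split => // x /(_ (Num.bound `|f x|) I) /= fx_gt.
  have := lt_trans (archi_boundP (normr_ge0 (f x))) fx_gt.
  by rewrite ltNge ler_norm.
have /fine_cvgP[Ffin /cvgrPdist_lt /(_ e e0)] : (mu \o F) @ \oo --> 0.
  rewrite -(measure0 mu) -F0; apply: nonincreasing_cvg_mu => //.
  - by rewrite (le_lt_trans (probability_le1 _ (mF 0%N))) ?ltey.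
  - exact: bigcap_measurable.
  - move=> n m nm; apply/subsetPset => x; apply: le_lt_trans.
    by rewrite ler_nat.
move=> /(filterI Ffin) [N _ /(_ N (leqnn N))[/= finN]].
rewrite sub0r normrN => ltN; exists N.
by rewrite -(fineK finN) lee_fin (le_trans (ler_norm _)) ?ltW.
Qed.
End probability_integral.

Section mkact_bounds.
Local Open Scope ereal_scope.
Context d (T : measurableType d) (R : realType).
Variable mu : probability T R.

Lemma integral_mkact_le (k : R.-spker T ~> T) (h W : T -> R) (a b : R) :
  (0 <= a)%R -> (0 <= b)%R ->
  (forall x, 0 <= h x)%R -> measurable_fun [set: T] h ->
  (forall x, 0 <= W x)%R -> measurable_fun [set: T] W ->
  (forall x, \int[k x]_y (h y)%:E <= (b + a * W x)%:E) ->
  \int[mkact mu k]_x (h x)%:E <= b%:E + a%:E * \int[mu]_x (W x)%:E.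
Proof.
move=> a0 b0 h0 mh W0 mW hk.
have mhE : measurable_fun [set: T] (EFin \o h) by exact/measurable_EFinP.
rewrite integral_mkact// -integral_affine//; last exact: probability_setT.
apply: ge0_le_integral => //.
- by move=> x _; apply: integral_ge0 => y _; rewrite lee_fin.
- by apply: measurable_fun_integral_kernel => // U; exact: measurable_kernel.
- apply/measurable_EFinP/measurable_funD; first exact: measurable_cst.
  exact: measurable_funM.
Qed.

Lemma integral_mkact_dominated_le (k : R.-pker T ~> T) (h W : T -> R)
    (c c' a b : R) :
  (0 <= c)%R -> (0 <= c')%R -> (0 <= a)%R -> (0 <= b)%R ->
  (forall x, 0 <= h x)%R -> measurable_fun [set: T] h ->
  (forall x, 0 <= W x)%R -> measurable_fun [set: T] W ->
  (forall x, h x <= c + c' * W x)%R ->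
  (forall x, \int[k x]_y (W y)%:E <= (b + a * W x)%:E) ->
  \int[mkact mu k]_x (h x)%:E <=
    (c + c' * b)%:E + (c' * a)%:E * \int[mu]_x (W x)%:E.
Proof.
move=> c0 c'0 a0 b0 h0 mh W0 mW h_le hk.
apply: integral_mkact_le => //; rewrite ?addr_ge0 ?mulr_ge0// => x.
have mW' : measurable_fun [set: T] (fun y => c + c' * W y)%R.
  by apply: measurable_funD => //; exact: measurable_funM.
apply: (@le_trans _ _ (\int[k x]_y (c + c' * W y)%:E)).
  apply: ge0_le_integral => //.
  - by move=> y _; rewrite lee_fin.
  - exact/measurable_EFinP.
  - exact/measurable_EFinP.
  - by move=> y _; rewrite lee_fin h_le.
rewrite integral_affine ?prob_kernel//.
have kW_fin : \int[k x]_y (W y)%:E \is a fin_num.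
  rewrite ge0_fin_numE; last by apply: integral_ge0 => y _; rewrite lee_fin.
  exact: le_lt_trans (hk x) (ltry _).
move: (hk x); rewrite -(fineK kW_fin) -EFinM -EFinD !lee_fin => kW_le.
have := ler_wpM2l c'0 kW_le.
nra.
Qed.
End mkact_bounds.

Section invariant_drift.
Local Open Scope ereal_scope.
Context d (T : measurableType d) (R : realType).
Variables (mu : probability T R) (P : R -> R.-pker T ~> T) (W : T -> R).
Variables (A B Gamma : R).
Hypotheses (W0 : forall x, (0 <= W x)%R) (mW : measurable_fun [set: T] W).
Hypotheses (A0 : (0 <= A)%R) (B0 : (0 <= B)%R) (Gamma0 : (0 < Gamma)%R).
Hypothesis mu_inv : invariant_measure P mu.
Hypothesis drift : forall x t, (0 <= t)%R ->
  \int[P t x]_y (W y)%:E <= (A * expR (- Gamma * t) * W x + B)%:E.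

Let measurable_min_W (N : R) :
  measurable_fun [set: T] (fun x => Num.min (W x) N).
Proof. by apply: measurable_minr => //; exact: measurable_cst. Qed.

Lemma drift_uniform_le t x : (0 <= t)%R ->
  \int[P t x]_y (W y)%:E <= (B + A * W x)%:E.
Proof.
move=> t0; apply: le_trans (drift x t0) _.
rewrite lee_fin addrC lerD2l ler_wpM2r// ler_piMr// expR_le1 mulNr oppr_le0.
by rewrite mulr_ge0 ?(ltW Gamma0).
Qed.

Lemma drift_min_le (N K t : R) :
  (0 <= N)%R -> (0 <= K)%R -> (0 <= t)%R -> forall x,
  \int[P t x]_y (Num.min (W y) N)%:E <=
    ((B + A * expR (- Gamma * t) * K) + N * \1_[set y | K < W y]%R x)%:E.
Proof.
move=> N0 K0 t0 x; rewrite indicE.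
have Wmin0 y : (0 <= Num.min (W y) N)%R by rewrite le_min W0.
have [Kx|xK] := ltP K (W x).
  rewrite mem_set// mulr1; apply: (@le_trans _ _ (\int[P t x]_y N%:E)).
    apply: ge0_le_integral => //; first by move=> y _; rewrite lee_fin.
    - exact/measurable_EFinP.
    - by move=> y _; rewrite lee_fin ge_min lexx orbT.
  rewrite integral_cst// prob_kernel mule1 lee_fin lerDr.
  by rewrite addr_ge0 ?mulr_ge0 ?expR_ge0.
rewrite memNset ?mulr0 ?addr0; last by apply/negP; rewrite -leNgt.
apply: (@le_trans _ _ (\int[P t x]_y (W y)%:E)).
  apply: ge0_le_integral => //.
  - by move=> y _; rewrite lee_fin.
  - exact/measurable_EFinP.
  - exact/measurable_EFinP.
  - by move=> y _; rewrite lee_fin ge_min lexx.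
apply: le_trans (drift x t0) _; rewrite lee_fin addrC lerD2l.
by rewrite ler_wpM2l ?mulr_ge0 ?expR_ge0.
Qed.

Lemma integral_min_le_tail (N K t : R) :
  (0 <= N)%R -> (0 <= K)%R -> (0 <= t)%R ->
  \int[mu]_x (Num.min (W x) N)%:E <=
    (B + A * expR (- Gamma * t) * K)%:E + N%:E * mu [set x | K < W x]%R.
Proof.
move=> N0 K0 t0.
rewrite (eq_measure_integral (mkact mu (P t))); last first.
  by move=> S mS _; rewrite mu_inv.
have mS := measurable_set_gtr K mW.
apply: le_trans (integral_mkact_le _ _ _ _ _ _ _ (drift_min_le N0 K0 t0)) _ => //.
- by rewrite addr_ge0 ?mulr_ge0 ?expR_ge0.
- by move=> x; rewrite le_min W0.
- by rewrite integral_indic ?setIT.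
Qed.

Lemma integral_min_le (N : R) : (0 <= N)%R ->
  \int[mu]_x (Num.min (W x) N)%:E <= B%:E.
Proof.
move=> N0; apply/lee_addgt0Pr => e e0.
have e2 : (0 < e / 2)%R by rewrite divr_gt0.
have N1 : (0 < N + 1)%R by rewrite ltr_wpDl.
have [K muK] := exists_tail_le mu mW (divr_gt0 e2 N1).
have [t t0 AtK] := expR_decay_le A0 (ler0n _ K) Gamma0 e2.
apply: le_trans (integral_min_le_tail N0 (ler0n _ K) t0) _.
have muK_fin : mu [set x | K%:R < W x]%R \is a fin_num.
  by rewrite ge0_fin_numE// (le_lt_trans muK) ?ltry.
move: muK; rewrite -(fineK muK_fin) -EFinM -EFinD !lee_fin ler_pdivlMr// => muK.
have := fine_ge0 (measure_ge0 mu [set x | K%:R < W x]%R).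
nra.
Qed.

Lemma invariant_integral_le : \int[mu]_x (W x)%:E <= B%:E.
Proof.
pose g (n : nat) x := (Num.min (W x) n%:R)%:E.
have mg n : measurable_fun [set: T] (g n).
  exact/measurable_EFinP/measurable_min_W.
have g0 n x : 0 <= g n x by rewrite lee_fin le_min W0 ler0n.
have g_nd x : [set: T] x -> nondecreasing_seq (g ^~ x).
  by move=> _ n m nm; rewrite lee_fin le_min !ge_min lexx ler_nat nm !orbT.
have g_lim x : limn (g ^~ x) = (W x)%:E.
  apply/cvg_lim => //; apply: cvg_near_cst.
  exists (Num.bound (W x)) => // n /= Wn.
  by rewrite /g min_l// (le_trans (ltW (archi_boundP (W0 x)))) ?ler_nat.
have g_cvg := cvg_monotone_convergence (mu := mu) measurableT mg
  (fun n x _ => g0 n x) g_nd.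
rewrite (eq_integral (fun x => limn (g ^~ x))); last by move=> x _; rewrite g_lim.
rewrite -(cvg_lim _ g_cvg)//; apply: lime_le.
  by apply/cvg_ex; exists (\int[mu]_x limn (g ^~ x)).
by apply: nearW => n; exact: integral_min_le.
Qed.
End invariant_drift.

Theorem corollary3p4 (R : realType) (d : measure_display) (T : measurableType d)
  (rho : T -> T -> R) (P : R -> R.-pker T ~> T) (V : T -> R)
  (mustar : probability T R) (kappa : R) :
  polish_borel rho ->
  markov_semigroup P ->
  rho_continuous rho V ->
  (forall x, 0 <= V x) ->
  (* (a) *)
  invariant_measure P mustar ->
  (forall mu : probability T R, invariant_measure P mu ->
     forall A, measurable A -> mu A = mustar A) ->
  0 < kappa ->
  (exists (gamma : R) (C : {measure set T -> \bar R} -> R),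
     [/\ 0 < gamma,
         (forall nu : probability T R,
            (\int[nu]_x (V x)%:E < +oo)%E -> 0 <= C nu),
         (forall x, C (\d_x) = kappa * Num.sqrt (V x + 1)) &
         (forall nu : probability T R, (\int[nu]_x (V x)%:E < +oo)%E ->
            forall t, 0 <= t ->
            (dFM rho (mkact nu (P t)) mustar <= (C nu * expR (- gamma * t))%:E)%E)]) ->
  (* (b) *)
  (exists A B Gamma : R, [/\ 0 <= A, 0 <= B, 0 < Gamma &
     forall x t, 0 <= t ->
       (\int[P t x]_y (V y ^+ 2)%:E <= (A * expR (- Gamma * t) * V x ^+ 2 + B)%:E)%E]) ->
  (forall p : R, 0 < p <= 4 ->
     (forall nu : probability T R, (\int[nu]_x (V x ^+ 2)%:E < +oo)%E ->
        exists M : R, forall t, 0 <= t ->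
          (\int[mkact nu (P t)]_x ((kappa * Num.sqrt (V x + 1)) `^ p)%:E
             <= M%:E)%E) /\
     (\int[mustar]_x ((kappa * Num.sqrt (V x + 1)) `^ p)%:E < +oo)%E) /\
  (\int[mustar]_x (V x ^+ 2)%:E < +oo)%E.
Proof.
move=> polishT _ V_cont V0 mustar_inv _ kappa0 _ [A [B [Gamma [A0 B0 Gamma0 drift]]]].
have mV := rho_continuous_measurable polishT V_cont.
have mV2 : measurable_fun [set: T] (fun x => V x ^+ 2) by exact: measurable_funX.
have V20 x : 0 <= V x ^+ 2 by exact: sqr_ge0.
have mustar_V2 : (\int[mustar]_x (V x ^+ 2)%:E <= B%:E)%E.
  exact: (invariant_integral_le V20 mV2 A0 B0 Gamma0 mustar_inv drift).
have mustar_V2_fin := le_lt_trans mustar_V2 (ltry B).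
split=> // p p04; pose c := 2 * kappa ^+ 4.
have c0 : 0 <= c by rewrite mulr_ge0 ?exprn_ge0 ?(ltW kappa0).
have bounded (nu : probability T R) : (\int[nu]_x (V x ^+ 2)%:E < +oo)%E ->
    exists M, forall t, 0 <= t ->
    (\int[mkact nu (P t)]_x ((kappa * Num.sqrt (V x + 1)) `^ p)%:E <= M%:E)%E.
  move=> nu_V2; have nu_V2_fin : (\int[nu]_x (V x ^+ 2)%:E)%E \is a fin_num.
    by rewrite ge0_fin_numE// integral_ge0// => x _; rewrite lee_fin.
  exists ((1 + c + c * B) + c * A * fine (\int[nu]_x (V x ^+ 2)%:E)%E) => t t0.
  rewrite EFinD EFinM fineK//.
  apply: integral_mkact_dominated_le; rewrite ?addr_ge0//.
  - by move=> x; exact: powR_ge0.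
  - exact: measurable_powR_mul_sqrtD1.
  - by move=> x; exact: powR_mul_sqrtD1_le (ltW kappa0) (V0 x) p04.
  - by move=> x; exact: (drift_uniform_le V20 A0 Gamma0 drift).
split; first exact: bounded.
have [M M_bound] := bounded mustar mustar_V2_fin.
rewrite (eq_measure_integral (mkact mustar (P 0))) => [|S mS _].
  exact: le_lt_trans (M_bound 0 (lexx 0)) (ltry M).
by rewrite mustar_inv.
Qed.
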